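(* Let $l_0,\ldots,l_{N-1}$ be lines in the real projective plane in bounded general position, with associated graph $G$. Suppose $v_0,\ldots,v_{m-1}$ are vertices of $G$ connected consecutively by edges $e_0,\ldots,e_{m-1}$ of $G$ lying on distinct lines of the arrangement, and that these form (the boundary of) a convex $m$-polygon $V$. Then $V$ is an alcove.
   Context: Lines in $\mathbb{R}P^2$ are in general position if no three of them pass through a common point, and in bounded position if all their pairwise intersection points lie in the affine plane $\mathbb{R}^2$. For lines in bounded general position, the graph $G$ has as vertices the pairwise intersection points of the lines; two vertices $v_1,v_2$ are joined by an edge if some line of the arrangement contains both and no third vertex lies between them on that line; the edge is the closed segment joining them. An alcove is a subset $V\subset\mathbb{R}^2$ such that (i) $V$ is compact, convex and connected, (ii) its boundary $\partial V$ is a union of edges of $G$ belonging to distinct lines, and (iii) $V$ contains no proper subset $W$ satisfying (i) and (ii). *)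

From HB Require Import structures.
From mathcomp Require Import all_boot all_order all_algebra.
From mathcomp Require Import all_classical all_reals all_analysis.
Set Implicit Arguments. Unset Strict Implicit. Unset Printing Implicit Defensive.
Import Order.TTheory GRing.Theory Num.Theory.
Import numFieldNormedType.Exports.
Local Open Scope ring_scope.
Local Open Scope classical_set_scope.

Section Arrangements.
Variable R : realType.

Local Notation pt := (R * R)%type.

(* affine line  { (x,y) | a x + b y = c }  encoded by (a, b, c) *)
Definition line := (R * R * R)%type.

Definition on_line (l : line) (p : pt) : Prop :=
  l.1.1 * p.1 + l.1.2 * p.2 = l.2.

(* Lines in RP^2 in bounded general position: all pairwise intersection
   points are affine, i.e. the lines are affine lines (proper equations),
   pairwise non-parallel (hence distinct), and no three are concurrent. *)
Definition bounded_general_position (N : nat) (L : 'I_N -> line) : Prop :=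
  (forall i, (L i).1.1 != 0 \/ (L i).1.2 != 0) /\
  (forall i j, i != j -> (L i).1.1 * (L j).1.2 - (L j).1.1 * (L i).1.2 != 0) /\
  (forall i j k (p : pt), i != j -> j != k -> i != k ->
      ~ (on_line (L i) p /\ on_line (L j) p /\ on_line (L k) p)).

Definition vertex N (L : 'I_N -> line) (p : pt) : Prop :=
  exists i j, i != j /\ on_line (L i) p /\ on_line (L j) p.

Definition comb (t : R) (p q : pt) : pt :=
  ((1 - t) * p.1 + t * q.1, (1 - t) * p.2 + t * q.2).

Definition segment (p q : pt) : set pt :=
  [set x | exists2 t, 0 <= t <= 1 & x = comb t p q].

Definition open_segment (p q : pt) : set pt :=
  [set x | exists2 t, 0 < t < 1 & x = comb t p q].

Definition is_edge N (L : 'I_N -> line) (i : 'I_N) (p q : pt) : Prop :=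
  p <> q /\ vertex L p /\ vertex L q /\ on_line (L i) p /\ on_line (L i) q /\
  (forall r, vertex L r -> ~ open_segment p q r).

Definition convex (A : set pt) : Prop :=
  forall p q t, A p -> A q -> 0 <= t <= 1 -> A (comb t p q).

Definition convex_hull (S : set pt) : set pt :=
  [set x | forall C, convex C -> S `<=` C -> C x].

Definition boundary (A : set pt) : set pt := closure A `\` interior A.

(* conditions (i) and (ii) of the definition of an alcove; (i) also asks for
   nonempty interior *)
Definition alcove_cond N (L : 'I_N -> line) (W : set pt) : Prop :=
  [/\ compact W, convex W, connected W, interior W !=set0 &
      exists s : seq ('I_N * pt * pt),
        [/\ uniq [seq e.1.1 | e <- s],
            (forall e, e \in s -> is_edge L e.1.1 e.1.2 e.2) &
            boundary W = [set x | exists2 e, e \in s & segment e.1.2 e.2 x]]].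

Definition alcove N (L : 'I_N -> line) (V : set pt) : Prop :=
  alcove_cond L V /\
  ~ (exists W, W `<=` V /\ W <> V /\ alcove_cond L W).

End Arrangements.
Notation pt R := (R * R)%type (only parsing).

(* The polygon V is compact, convex and connected, has nonempty interior (three
   consecutive vertices span a nondegenerate triangle, as two consecutive edges lie
   on distinct lines) and its boundary is the union of its edges, so it satisfies
   conditions (i) and (ii).  The key to minimality is that no line of the
   arrangement meets the interior of V.  Walking from an interior point along such
   a line l in both directions, one leaves V at boundary points lying on l.  A
   boundary point on l must lie on the edge carried by l: a vertex of V only lies
   on the lines of its two edges (general position), and an edge contains no
   vertex of G in its relative interior.  So both exit points, and hence the
   interior point between them, lie on that edge, which is absurd.  Now if W is a
   proper subset of V satisfying (i) and (ii), the segment from an interior point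
   of W to a point of V outside W leaves W at a boundary point of W.  That point
   lies on a line of the arrangement, but by convexity it is interior to V. *)

From mathcomp Require Import all_boot all_order all_algebra.
From mathcomp Require Import all_classical all_reals all_analysis.
From mathcomp Require Import ring lra zify.
Import numFieldNormedType.Exports.
Import Order.TTheory GRing.Theory Num.Theory.
Set Implicit Arguments.
Unset Strict Implicit.
Unset Printing Implicit Defensive.
Local Open Scope ring_scope.
Local Open Scope classical_set_scope.

Lemma ordS_neq n (k : 'I_n) : (1 < n)%N -> ordS k != k.
Proof.
move=> n1; apply/eqP => /(congr1 val) /=; case: k => k /= kn.
have [kn1|nk] := ltnP k.+1 n; first by rewrite modn_small //; lia.
have -> : k.+1 = n by lia.
by rewrite modnn; lia.
Qed.

Section Plane.
Variable R : realType.
Local Notation pt := (R * R)%type.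
Implicit Types (p q r : pt) (S C : set pt).

Lemma nbhs_pairP (x : pt) (P : set pt) : nbhs x P <->
  exists2 e : R, 0 < e & forall y : pt, `|x.1 - y.1| < e -> `|x.2 - y.2| < e -> P y.
Proof.
rewrite nbhs_ballP; split => -[e e0 H]; exists e => //.
  by move=> y h1 h2; apply: H; split.
by move=> y [h1 h2]; exact: H.
Qed.

Lemma comb0 p q : comb 0 p q = p.
Proof. by case: p => a b; rewrite /comb /=; congr pair; ring. Qed.

Lemma comb1 p q : comb 1 p q = q.
Proof. by case: q => a b; rewrite /comb /=; congr pair; ring. Qed.

Lemma comb_continuous p q : continuous (fun t : R => comb t p q).
Proof.
have affine_cont (a b : R) : continuous (fun t : R => (1 - t) * a + t * b).
  move=> t; apply: cvgD; apply: cvgM; try exact: cvg_cst; try exact: cvg_id.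
  by apply: cvgB; [exact: cvg_cst | exact: cvg_id].
by move=> t; exact: (cvg_pair (affine_cont _ _ t) (affine_cont _ _ t)).
Qed.

Lemma segment_l p q : segment p q p.
Proof. by exists 0; [rewrite lexx ler01 | rewrite comb0]. Qed.

Lemma segment_r p q : segment p q q.
Proof. by exists 1; [rewrite lexx ler01 | rewrite comb1]. Qed.

Lemma convex_segment p q : convex (segment p q).
Proof.
move=> _ _ s [t1 /andP [t10 t11] ->] [t2 /andP [t20 t21] ->] /andP [s0 s1].
exists ((1 - s) * t1 + s * t2); first by apply/andP; split; nra.
by rewrite /comb /=; congr pair; ring.
Qed.

Lemma boundary_subset_closed S : boundary S `<=` S -> closed S.
Proof.
move=> bS x Sx; have [iSx|niSx] := pselect (interior S x).
  exact: interior_subset.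
by apply: bS; split.
Qed.

Lemma separated_interior_setC S : closed S -> separated (interior S) (~` S).
Proof.
move=> cS; split; apply/disjoints_subset; last by rewrite closure_setC setCK.
rewrite setCK {2}((closure_id S).1 cS).
exact: closureS (@interior_subset _ S).
Qed.

Lemma segment_exits_closed S a b : closed S -> S a -> ~ S b ->
  exists2 t, 0 <= t < 1 & boundary S (comb t a b).
Proof.
move=> cS Sa Sb; apply: contrapT => noexit.
pose ab := (fun t => comb t a b) @` `[0, 1].
have ab_conn : connected ab.
  apply: connected_continuous_connected; first exact: segment_connected.
  by apply: continuous_subspaceT; apply: comb_continuous.
have ab_a : ab a by exists 0; rewrite ?comb0 //= in_itv /= lexx ler01.
have ab_b : ab b by exists 1; rewrite ?comb1 //= in_itv /= lexx ler01.
have : ab `<=` interior S `|` ~` S.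
  move=> _ [t t01 <-]; have [|niS] := pselect (interior S (comb t a b)).
    by left.
  right => Sy; apply: noexit; exists t; last first.
    by split => //; rewrite -((closure_id S).1 cS).
  move: t01; rewrite /= in_itv /= => /andP [-> t1] /=.
  by rewrite lt_neqAle t1 andbT; apply/eqP => t1e; apply: Sb; rewrite -(comb1 a b) -t1e.
case/(connected_subset (separated_interior_setC cS))/(_ ab_conn) => sub.
  exact: Sb (interior_subset (sub b ab_b)).
exact: sub ab_a Sa.
Qed.

Lemma convex_interior_comb S w u t : convex S -> interior S w -> S u ->
  0 <= t < 1 -> interior S (comb t w u).
Proof.
move=> cS /nbhs_pairP [e e0 He] Su /andP [t0 t1].
have t1' : 0 < 1 - t by rewrite subr_gt0.
apply/nbhs_pairP; exists ((1 - t) * e); first exact: mulr_gt0.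
move=> y h1 h2.
(* y is the image of the point q near w under the homothety of ratio 1 - t centred at u *)
pose q : pt := ((y.1 - t * u.1) / (1 - t), (y.2 - t * u.2) / (1 - t)).
have Sq : S q.
  apply: He.
    rewrite (_ : w.1 - q.1 = ((comb t w u).1 - y.1) / (1 - t)); last first.
      by rewrite /q /comb /=; field; rewrite gt_eqF.
    by rewrite normrM normfV (gtr0_norm t1') ltr_pdivrMr // mulrC.
  rewrite (_ : w.2 - q.2 = ((comb t w u).2 - y.2) / (1 - t)); last first.
    by rewrite /q /comb /=; field; rewrite gt_eqF.
  by rewrite normrM normfV (gtr0_norm t1') ltr_pdivrMr // mulrC.
have -> : y = comb t q u.
  rewrite /q; case: y {h1 h2 q Sq} => y1 y2.
  by rewrite /comb /=; congr pair; field; rewrite gt_eqF.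
by apply: cS => //; rewrite t0 ltW.
Qed.

Lemma convex_connected S : convex S -> connected S.
Proof.
move=> cS; have [/eqP ->|/set0P [c Sc]] := boolP (S == set0); first exact: connected0.
have -> : S = \bigcup_(x in S) ((fun t => comb t c x) @` `[0, 1]).
  apply/seteqP; split => [x Sx|x [y Sy [t t01 <-]]].
    by exists x => //; exists 1; rewrite ?comb1 //= in_itv /= lexx ler01.
  by apply: cS => //; move: t01; rewrite /= in_itv.
apply: bigcup_connected.
  by exists c => x Sx; exists 0; rewrite ?comb0 //= in_itv /= lexx ler01.
move=> x Sx; apply: connected_continuous_connected; first exact: segment_connected.
by apply: continuous_subspaceT; apply: comb_continuous.
Qed.

Lemma convex_hull_subset S C : convex C -> S `<=` C -> convex_hull S `<=` C.
Proof. by move=> cC SC x; apply. Qed.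

Lemma convex_hull_convex S : convex (convex_hull S).
Proof.
move=> p q t hp hq t01 C cC SC.
by apply: (cC p q t) => //; [apply: hp | apply: hq].
Qed.

Lemma subset_convex_hull S : S `<=` convex_hull S.
Proof. by move=> x Sx C _; apply. Qed.

Definition square (M : R) : set pt := `[- M, M] `*` `[- M, M].

Lemma squareP M p : square M p <-> `|p.1| <= M /\ `|p.2| <= M.
Proof. by rewrite /square /= !in_itv /= -!ler_norml. Qed.

Lemma convex_square M : convex (square M).
Proof.
move=> p q t /squareP [p1 p2] /squareP [q1 q2] /andP [t0 t1].
have t1' : 0 <= 1 - t by rewrite subr_ge0.
by apply/squareP; rewrite /comb /=; split; apply: le_trans (ler_normD _ _) _;
  rewrite !normrM (ger0_norm t0) (ger0_norm t1'); nra.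
Qed.

Lemma compact_square M : compact (square M).
Proof. by apply: compact_setX; apply: segment_compact. Qed.

Lemma ray_leaves_square M r (d : pt) : d.1 != 0 \/ d.2 != 0 ->
  exists2 T, 0 < T & ~ square M (r.1 + T * d.1, r.2 + T * d.2).
Proof.
move=> d0; have nd0 : 0 < `|d.1| + `|d.2|.
  have := normr_ge0 d.1; have := normr_ge0 d.2.
  by case: d0; rewrite -normr_gt0 => ?; lra.
set nd := `|d.1| + `|d.2| in nd0 *.
pose T := (2 * `|M| + `|r.1| + `|r.2| + 1) / nd.
have T0 : 0 < T.
  by rewrite divr_gt0 //; have := normr_ge0 M; have := normr_ge0 r.1; have := normr_ge0 r.2; lra.
have ray_norm (x y : R) : T * `|y| <= `|x + T * y| + `|x|.
  have := ler_normB (x + T * y) x.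
  rewrite (_ : x + T * y - x = T * y); last by ring.
  by rewrite normrM (gtr0_norm T0).
exists T => // /squareP /= [h1 h2].
have hT : T * nd = 2 * `|M| + `|r.1| + `|r.2| + 1 by rewrite /T; field; rewrite gt_eqF.
have := ray_norm r.1 d.1; have := ray_norm r.2 d.2; have := ler_norm M.
by move: hT; rewrite /nd mulrDr; lra.
Qed.

Definition area2 p0 p1 p2 : R :=
  (p1.1 - p0.1) * (p2.2 - p0.2) - (p1.2 - p0.2) * (p2.1 - p0.1).

Lemma convex_barycentric C p0 p1 p2 l1 l2 : convex C -> C p0 -> C p1 -> C p2 ->
  0 <= l1 -> 0 <= l2 -> l1 + l2 <= 1 ->
  C (p0.1 + l1 * (p1.1 - p0.1) + l2 * (p2.1 - p0.1),
     p0.2 + l1 * (p1.2 - p0.2) + l2 * (p2.2 - p0.2)).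
Proof.
move=> cC C0 C1 C2 l10 l20 l12.
have [/eqP l0|l_neq0] := eqVneq (l1 + l2) 0.
  have [-> ->] : l1 = 0 /\ l2 = 0 by lra.
  by rewrite !mul0r !addr0 -surjective_pairing.
have l_gt0 : 0 < l1 + l2 by rewrite lt_neqAle eq_sym l_neq0 addr_ge0.
have Cq : C (comb (l2 / (l1 + l2)) p1 p2).
  apply: cC => //; rewrite divr_ge0 ?addr_ge0 //= ler_pdivrMr // mul1r; lra.
have -> : (p0.1 + l1 * (p1.1 - p0.1) + l2 * (p2.1 - p0.1),
           p0.2 + l1 * (p1.2 - p0.2) + l2 * (p2.2 - p0.2)) =
          comb (l1 + l2) p0 (comb (l2 / (l1 + l2)) p1 p2).
  by rewrite /comb /=; congr pair; field.
by apply: cC => //; rewrite ltW.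
Qed.

Lemma norm_cross_le (x1 x2 w1 w2 e : R) : `|x1| < e -> `|x2| < e ->
  `|x1 * w2 - x2 * w1| <= e * (`|w1| + `|w2|).
Proof.
move=> h1 h2; apply: le_trans (ler_normB _ _) _; rewrite !normrM.
have := normr_ge0 w1; have := normr_ge0 w2; nra.
Qed.

Lemma convex_triangle_interior C p0 p1 p2 : convex C -> C p0 -> C p1 -> C p2 ->
  area2 p0 p1 p2 != 0 ->
  interior C ((p0.1 + p1.1 + p2.1) / 3, (p0.2 + p1.2 + p2.2) / 3).
Proof.
move=> cC C0 C1 C2; rewrite /area2.
set a1 := p1.1 - p0.1; set a2 := p1.2 - p0.2.
set b1 := p2.1 - p0.1; set b2 := p2.2 - p0.2.
set D := _ - _ => D0.
set K := `|a1| + `|a2| + `|b1| + `|b2| + 1.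
have K0 : 0 < K.
  have := normr_ge0 a1; have := normr_ge0 a2; have := normr_ge0 b1.
  by have := normr_ge0 b2; rewrite /K; lra.
set e := `|D| / (6 * K).
have e0 : 0 < e by rewrite divr_gt0 ?normr_gt0 ?mulr_gt0.
have eK : e * K = 1 / 6 * `|D| by rewrite /e; field; rewrite gt_eqF.
(* by Cramer's rule, moving less than e away from the centroid changes each
   barycentric coordinate by at most 1/6 *)
have coord_small (w1 w2 z1 z2 : R) : `|z1| < e -> `|z2| < e -> `|w1| + `|w2| <= K ->
    - (1 / 6) <= (z1 * w2 - z2 * w1) / D <= 1 / 6.
  move=> hz1 hz2 hw; rewrite -ler_norml normrM normfV ler_pdivrMr ?normr_gt0 //.
  apply: le_trans (norm_cross_le w1 w2 hz1 hz2) _.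
  by rewrite -eK ler_wpM2l // ltW.
apply/nbhs_pairP; exists e => // y h1 h2.
pose x1 := y.1 - (p0.1 + p1.1 + p2.1) / 3; pose x2 := y.2 - (p0.2 + p1.2 + p2.2) / 3.
have hx1 : `|x1| < e by rewrite /x1 distrC.
have hx2 : `|x2| < e by rewrite /x2 distrC.
have /andP [l1_lo l1_hi] : - (1 / 6) <= (x1 * b2 - x2 * b1) / D <= 1 / 6.
  by apply: coord_small; rewrite // /K; have := normr_ge0 a1; have := normr_ge0 a2; lra.
have /andP [l2_lo l2_hi] : - (1 / 6) <= (x2 * a1 - x1 * a2) / D <= 1 / 6.
  by apply: coord_small; rewrite // /K; have := normr_ge0 b1; have := normr_ge0 b2; lra.
pose l1 := 1 / 3 + (x1 * b2 - x2 * b1) / D.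
pose l2 := 1 / 3 + (x2 * a1 - x1 * a2) / D.
have -> : y = (p0.1 + l1 * a1 + l2 * b1, p0.2 + l1 * a2 + l2 * b2).
  rewrite {1}[y]surjective_pairing /l1 /l2 /x1 /x2 /D /a1 /a2 /b1 /b2.
  by congr pair; field; exact: D0.
by apply: convex_barycentric => //; rewrite /l1 /l2; lra.
Qed.

Lemma on_line_comb (l : line R) p q t : on_line l p -> on_line l q ->
  on_line l (comb t p q).
Proof.
rewrite /on_line /comb /= => hp hq.
rewrite [LHS](_ : _ = (1 - t) * (l.1.1 * p.1 + l.1.2 * p.2) + t * (l.1.1 * q.1 + l.1.2 * q.2)).
  by rewrite hp hq; ring.
by ring.
Qed.

Lemma on_line2_eq (l1 l2 : line R) p q : l1.1.1 * l2.1.2 - l2.1.1 * l1.1.2 != 0 ->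
  on_line l1 p -> on_line l1 q -> on_line l2 p -> on_line l2 q -> p = q.
Proof.
rewrite /on_line; set D := _ - _ => D0 h1p h1q h2p h2q.
have e1 : D * (p.1 - q.1) = 0.
  transitivity (l2.1.2 * ((l1.1.1 * p.1 + l1.1.2 * p.2) - (l1.1.1 * q.1 + l1.1.2 * q.2))
              - l1.1.2 * ((l2.1.1 * p.1 + l2.1.2 * p.2) - (l2.1.1 * q.1 + l2.1.2 * q.2))).
    by rewrite /D; ring.
  by rewrite h1p h1q h2p h2q !subrr !mulr0 subrr.
have e2 : D * (p.2 - q.2) = 0.
  transitivity (l1.1.1 * ((l2.1.1 * p.1 + l2.1.2 * p.2) - (l2.1.1 * q.1 + l2.1.2 * q.2))
              - l2.1.1 * ((l1.1.1 * p.1 + l1.1.2 * p.2) - (l1.1.1 * q.1 + l1.1.2 * q.2))).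
    by rewrite /D; ring.
  by rewrite h1p h1q h2p h2q !subrr !mulr0 subrr.
move/eqP: e1; rewrite mulf_eq0 (negbTE D0) subr_eq0 => /eqP e1.
move/eqP: e2; rewrite mulf_eq0 (negbTE D0) subr_eq0 => /eqP e2.
by rewrite [p]surjective_pairing [q]surjective_pairing e1 e2.
Qed.

Lemma area2_eq0_on_line (l : line R) p0 p1 p2 : p1 <> p0 ->
  on_line l p0 -> on_line l p1 -> area2 p0 p1 p2 = 0 -> on_line l p2.
Proof.
rewrite /on_line /area2 => p10 h0 h1 hD.
set X := l.1.1 * (p2.1 - p0.1) + l.1.2 * (p2.2 - p0.2).
have n01 : l.1.1 * (p1.1 - p0.1) + l.1.2 * (p1.2 - p0.2) = 0.
  rewrite [LHS](_ : _ = (l.1.1 * p1.1 + l.1.2 * p1.2) - (l.1.1 * p0.1 + l.1.2 * p0.2)).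
    by rewrite h0 h1 subrr.
  by ring.
(* X is the dot product of the normal of l with p2 - p0, which is parallel to p1 - p0 *)
have X1 : X * (p1.1 - p0.1) = 0.
  transitivity ((p2.1 - p0.1) * (l.1.1 * (p1.1 - p0.1) + l.1.2 * (p1.2 - p0.2))
     + l.1.2 * ((p1.1 - p0.1) * (p2.2 - p0.2) - (p1.2 - p0.2) * (p2.1 - p0.1))).
    by rewrite /X; ring.
  by rewrite n01 hD !mulr0 addr0.
have X2 : X * (p1.2 - p0.2) = 0.
  transitivity ((p2.2 - p0.2) * (l.1.1 * (p1.1 - p0.1) + l.1.2 * (p1.2 - p0.2))
     - l.1.1 * ((p1.1 - p0.1) * (p2.2 - p0.2) - (p1.2 - p0.2) * (p2.1 - p0.1))).
    by rewrite /X; ring.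
  by rewrite n01 hD !mulr0 subr0.
have X0 : X = 0.
  move/eqP: X1; rewrite mulf_eq0 subr_eq0 => /orP [/eqP // | /eqP e1].
  move/eqP: X2; rewrite mulf_eq0 subr_eq0 => /orP [/eqP // | /eqP e2].
  by case: p10; rewrite [p1]surjective_pairing [p0]surjective_pairing e1 e2.
rewrite [LHS](_ : _ = X + (l.1.1 * p0.1 + l.1.2 * p0.2)); last by rewrite /X; ring.
by rewrite X0 h0 add0r.
Qed.

End Plane.

Section Polygon.
Variable R : realType.
Local Notation pt := (R * R)%type.
Variables (N : nat) (L : 'I_N -> line R) (m : nat) (v : 'I_m -> pt)
  (ln : 'I_m -> 'I_N) (V : set pt).
Hypothesis L_gp : bounded_general_position L.
Hypothesis m_gt2 : (2 < m)%N.
Hypothesis ln_inj : injective ln.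
Hypothesis edge_v : forall k, is_edge L (ln k) (v k) (v (ordS k)).
Hypothesis V_hull : V = convex_hull [set v k | k in [set: 'I_m]].
Hypothesis V_boundary :
  boundary V = [set x | exists k, segment (v k) (v (ordS k)) x].

Lemma convex_polygon : convex V.
Proof. by rewrite V_hull; exact: convex_hull_convex. Qed.

Lemma polygon_vertex k : V (v k).
Proof. by rewrite V_hull; apply: subset_convex_hull; exists k. Qed.

Lemma closed_polygon : closed V.
Proof.
apply: boundary_subset_closed; rewrite V_boundary => _ [k [t t01 ->]].
by apply: convex_polygon => //; apply: polygon_vertex.
Qed.

Lemma polygon_in_square : exists M, V `<=` square M.
Proof.
exists (\sum_k (`|(v k).1| + `|(v k).2|)); rewrite V_hull.
apply: convex_hull_subset; first exact: convex_square.
move=> _ [k _ <-]; apply/squareP.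
have : `|(v k).1| + `|(v k).2| <= \sum_j (`|(v j).1| + `|(v j).2|).
  by rewrite (bigD1 k) //= lerDl sumr_ge0 // => j _; rewrite addr_ge0.
by have := normr_ge0 (v k).1; have := normr_ge0 (v k).2; lra.
Qed.

Lemma ln_ordS_neq k : ln (ordS k) != ln k.
Proof. by rewrite (inj_eq ln_inj) ordS_neq // ltnW. Qed.

Lemma polygon_interior_neq0 : interior V !=set0.
Proof.
pose k0 : 'I_m := Ordinal (ltnW (ltnW m_gt2)).
have [v01 [_ [_ [h0 [h1 _]]]]] := edge_v k0.
have [v12 [_ [_ [g1 [g2 _]]]]] := edge_v (ordS k0).
have [_ [L_nonpar _]] := L_gp.
eexists; apply: (convex_triangle_interior convex_polygon (polygon_vertex k0)
  (polygon_vertex (ordS k0)) (polygon_vertex (ordS (ordS k0)))).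
apply/eqP => area0; apply: v12.
apply: (on_line2_eq (L_nonpar _ _ _) h1 _ g1 g2); first by rewrite eq_sym ln_ordS_neq.
by apply: area2_eq0_on_line h0 h1 area0 => e; apply: v01.
Qed.

Lemma vertex_on_edge_line j i : on_line (L i) (v j) ->
  exists k, ln k = i /\ segment (v k) (v (ordS k)) (v j).
Proof.
move=> vj_i; set jp := ord_pred j.
have jpS : ordS jp = j by rewrite /jp ord_predK.
have [_ [_ [_ [vj_j _]]]] := edge_v j.
have [_ [_ [_ [_ [vj_jp _]]]]] := edge_v jp; rewrite jpS in vj_jp.
have [->|ij] := eqVneq i (ln j); first by exists j; split => //; apply: segment_l.
have [->|ijp] := eqVneq i (ln jp).
  by exists jp; split => //; rewrite -{1}jpS; apply: segment_r.
have j_jp : ln j != ln jp by rewrite -{1}jpS ln_ordS_neq.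
have [_ [_ no3]] := L_gp.
by case: (no3 _ _ _ (v j) ij j_jp ijp).
Qed.

Lemma boundary_on_line_edge y i : boundary V y -> on_line (L i) y ->
  exists k, ln k = i /\ segment (v k) (v (ordS k)) y.
Proof.
rewrite V_boundary => -[k [t /andP [t0 t1] ->]] y_i.
have [t0e|t0n] := eqVneq t 0.
  by move: y_i; rewrite t0e comb0; apply: vertex_on_edge_line.
have [t1e|t1n] := eqVneq t 1.
  by move: y_i; rewrite t1e comb1; apply: vertex_on_edge_line.
have [->|ik] := eqVneq i (ln k); first by exists k; split => //; exists t; rewrite ?t0.
(* otherwise y would be a vertex strictly inside the edge k *)
have [_ [_ [_ [vk_k [vk1_k no_vertex]]]]] := edge_v k.
case: (no_vertex (comb t (v k) (v (ordS k)))).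
  by exists i, (ln k); split => //; split => //; apply: on_line_comb.
by exists t => //; rewrite !lt_neqAle eq_sym t0n t0 t1n t1.
Qed.

Lemma ray_hits_edge r i (d : pt) : interior V r -> on_line (L i) r ->
  d.1 != 0 \/ d.2 != 0 -> (L i).1.1 * d.1 + (L i).1.2 * d.2 = 0 ->
  exists u k, [/\ 0 < u, ln k = i &
    segment (v k) (v (ordS k)) (r.1 + u * d.1, r.2 + u * d.2)].
Proof.
move=> r_int r_i d0 d_i.
have [M VM] := polygon_in_square.
have [T T0 b_out] := ray_leaves_square M r d0.
set b := (_, _) in b_out.
have b_i : on_line (L i) b.
  rewrite /on_line /b /= -r_i; transitivity ((L i).1.1 * r.1 + (L i).1.2 * r.2 +
    T * ((L i).1.1 * d.1 + (L i).1.2 * d.2)); first by ring.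
  by rewrite d_i mulr0 addr0.
have [t /andP [t0 t1] y_bd] := segment_exits_closed closed_polygon
  (interior_subset r_int) (fun Vb => b_out (VM _ Vb)).
have t_gt0 : 0 < t.
  by rewrite lt_neqAle t0 andbT; apply/eqP => t0e; case: y_bd; rewrite -t0e comb0.
have [k [ki k_y]] := boundary_on_line_edge y_bd (on_line_comb t r_i b_i).
exists (t * T), k; split => //; first exact: mulr_gt0.
suff -> : (r.1 + t * T * d.1, r.2 + t * T * d.2) = comb t r b by [].
by rewrite /comb /b /=; congr pair; ring.
Qed.

Lemma polygon_interior_off_line r i : interior V r -> ~ on_line (L i) r.
Proof.
move=> r_int r_i; have [L_proper _] := L_gp.
pose d : pt := ((L i).1.2, - (L i).1.1); pose d' : pt := (- d.1, - d.2).
have d0 : d.1 != 0 \/ d.2 != 0.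
  by case: (L_proper i) => h; [right; rewrite oppr_eq0 | left].
have d'0 : d'.1 != 0 \/ d'.2 != 0.
  by case: (L_proper i) => h; [right; rewrite /= opprK | left; rewrite /= oppr_eq0].
have d_i : (L i).1.1 * d.1 + (L i).1.2 * d.2 = 0 by rewrite /=; ring.
have d'_i : (L i).1.1 * d'.1 + (L i).1.2 * d'.2 = 0 by rewrite /=; ring.
have [u [k [u0 ki k_fwd]]] := ray_hits_edge r_int r_i d0 d_i.
have [u' [k' [u'0 k'i k_bwd]]] := ray_hits_edge r_int r_i d'0 d'_i.
(* both exit points lie on the unique edge carried by line i, hence so does r *)
have k'k : k' = k by apply: ln_inj; rewrite ki k'i.
rewrite {}k'k in k_bwd.
have uu' : 0 < u + u' by rewrite addr_gt0.
have k_r : segment (v k) (v (ordS k)) r.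
  have -> : r = comb (u / (u + u')) (r.1 + u * d.1, r.2 + u * d.2)
                                    (r.1 + u' * d'.1, r.2 + u' * d'.2).
    by rewrite {1}[r]surjective_pairing /comb /=; congr pair; field; rewrite gt_eqF.
  apply: convex_segment => //; apply/andP; split; first by rewrite divr_ge0 // ltW.
  by rewrite ler_pdivrMr // mul1r lerDl ltW.
have : boundary V r by rewrite V_boundary; exists k.
by case.
Qed.

Lemma polygon_minimal W : W `<=` V -> alcove_cond L W -> W = V.
Proof.
move=> WV [W_compact _ _ [w w_int] [s [_ s_edges W_boundary]]].
apply: contrapT => WnV.
have [u Vu Wnu] : exists2 u, V u & ~ W u.
  apply: contrapT => VW; apply: WnV; apply/seteqP; split => // x Vx.
  by apply: contrapT => Wnx; apply: VW; exists x.
have W_closed : closed W := compact_closed (@norm_hausdorff _ _) W_compact.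
have [t t01 y_bd] := segment_exits_closed W_closed (interior_subset w_int) Wnu.
move: (y_bd); rewrite W_boundary => -[e es [t' _ y_e]].
have [_ [_ [_ [e1 [e2 _]]]]] := s_edges e es.
(* the exit point lies on a line of the arrangement but in the interior of V *)
apply: (@polygon_interior_off_line (comb t w u) e.1.1).
  exact: convex_interior_comb convex_polygon (interiorS WV w_int) Vu t01.
by rewrite y_e; apply: on_line_comb.
Qed.

Lemma polygon_alcove_cond : alcove_cond L V.
Proof.
split.
- have [M VM] := polygon_in_square.
  apply: (@subclosed_compact _ _ (square M)) => //.
  + exact: closed_polygon.
  + exact: compact_square.
- exact: convex_polygon.
- exact: convex_connected convex_polygon.
- exact: polygon_interior_neq0.
exists [seq (ln k, v k, v (ordS k)) | k <- enum 'I_m]; split.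
- by rewrite -map_comp map_inj_uniq ?enum_uniq.
- by move=> e /mapP [k _ ->]; exact: edge_v.
rewrite V_boundary; apply/seteqP; split => x.
  move=> [k k_x]; exists (ln k, v k, v (ordS k)) => //.
  by apply/mapP; exists k; rewrite ?mem_enum.
by move=> [e /mapP [k _ ->] e_x]; exists k.
Qed.

End Polygon.

Theorem lemma1p5 (R : realType) (N : nat) (L : 'I_N -> line R)
    (m : nat) (v : 'I_m -> pt R) (ln : 'I_m -> 'I_N) (V : set (pt R)) :
  bounded_general_position L ->
  (2 < m)%N ->
  injective ln ->
  (forall k : 'I_m, is_edge L (ln k) (v k) (v (ordS k))) ->
  V = convex_hull [set v k | k in [set: 'I_m]] ->
  boundary V = [set x | exists k : 'I_m, segment (v k) (v (ordS k)) x] ->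
  alcove L V.
Proof.
move=> L_gp m_gt2 ln_inj edge_v V_hull V_boundary; split.
  exact: polygon_alcove_cond L_gp m_gt2 ln_inj edge_v V_hull V_boundary.
move=> [W [WV [WnV W_alcove]]]; apply: WnV.
by apply: (polygon_minimal L_gp m_gt2 ln_inj edge_v V_hull V_boundary).
Qed.
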